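(* Let $k\ge 1$ and let $n=t_k=\frac{k(k+1)}{2}$. Then the maximum number of edges of a locally irregular (simple) graph of order $n$ is exactly $m_k:=\frac{k(k+1)(k-1)(3k+2)}{24}$.
   Context: All graphs are finite and simple. A graph is locally irregular if no two adjacent vertices have the same degree. $t_k=1+2+\dots+k$ denotes the $k$-th triangular number. *)

From mathcomp Require Import all_boot.
Set Implicit Arguments. Unset Strict Implicit. Unset Printing Implicit Defensive.

Definition simple_graph (T : finType) (e : rel T) : Prop :=
  symmetric e /\ irreflexive e.

Definition deg (T : finType) (e : rel T) (x : T) : nat := #|[set y | e x y]|.

Definition nedges (T : finType) (e : rel T) : nat :=
  #|[set p : {set T} | [exists x, exists y, (x != y) && e x y && (p == [set x; y])]]|.

Definition locally_irregular (T : finType) (e : rel T) : Prop :=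
  forall x y, e x y -> deg e x != deg e y.

Definition tri (k : nat) : nat := \sum_(1 <= i < k.+1) i.

(* m_k = k(k+1)(k-1)(3k+2)/24 (always an integer) *)
Definition mk (k : nat) : nat := (k * k.+1 * k.-1 * (3 * k + 2)) %/ 24.

(* Vertices of equal degree in a locally irregular graph are pairwise
   non-adjacent, so the vertices of degree d form a set of size at most n - d
   disjoint from the neighbourhood of any of them.  Hence at most j vertices
   have co-degree n - d = j, and at least n - t_j vertices have co-degree
   greater than j; summing over j < k, the co-degrees add up to at least
   1^2 + ... + k^2 when n = t_k.  By the handshake lemma,
   2|E| = n^2 - (sum of co-degrees) <= t_k^2 - (1^2 + ... + k^2) = 2 m_k.
   Equality holds for the complete multipartite graph with parts of sizes
   1, ..., k: a vertex in the part of size j has degree n - j. *)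

From mathcomp Require Import all_boot zify.
Set Implicit Arguments. Unset Strict Implicit. Unset Printing Implicit Defensive.

Definition sum_squares (k : nat) : nat := \sum_(1 <= i < k.+1) i ^ 2.

Lemma triS k : tri k.+1 = tri k + k.+1.
Proof. by rewrite /tri big_nat_recr. Qed.

Lemma sum_squaresS k : sum_squares k.+1 = sum_squares k + k.+1 ^ 2.
Proof. by rewrite /sum_squares big_nat_recr. Qed.

Lemma mul2_tri k : 2 * tri k = k * k.+1.
Proof. by elim: k => [|k IHk]; [rewrite /tri big_geq | rewrite triS; lia]. Qed.

Lemma mul6_sum_squares k : 6 * sum_squares k = k * k.+1 * (2 * k + 1).
Proof.
by elim: k => [|k IHk]; [rewrite /sum_squares big_geq | rewrite sum_squaresS; lia].
Qed.

Lemma leq_tri m n : m <= n -> tri m <= tri n.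
Proof. by move=> le_mn; have := mul2_tri m; have := mul2_tri n; nia. Qed.

Lemma mkE k : mk k = (tri k ^ 2 - sum_squares k) %/ 2.
Proof.
rewrite /mk.
have -> : k * k.+1 * k.-1 * (3 * k + 2) = 12 * (tri k ^ 2 - sum_squares k).
  have := mul2_tri k; have := mul6_sum_squares k.
  case: k => [|k]; first by rewrite /tri /sum_squares !big_geq.
  nia.
by rewrite (divnMl (p := 12) _ (d := 2)).
Qed.

Lemma sum_tri_diff k : \sum_(0 <= j < k) (tri k - tri j) = sum_squares k.
Proof.
elim: k => [|k IHk]; first by rewrite /sum_squares !big_geq.
rewrite big_nat_recr //= sum_squaresS -IHk triS.
rewrite (eq_big_nat _ _ (F2 := fun j => tri k - tri j + k.+1)); last first.
  by move=> j /andP[_ /ltnW/leq_tri le_jk]; rewrite addnBAC.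
by rewrite big_split sum_nat_const_nat /=; lia.
Qed.

Lemma sum_ltn_minn m k : \sum_(0 <= j < k) (j < m) = minn m k.
Proof.
by elim: k => [|k IHk]; [rewrite big_geq | rewrite big_nat_recr //= IHk; lia].
Qed.

Section LayerCake.
Variables (T : finType) (f : T -> nat).
Hypothesis card_fiber_le : forall j, #|[set v | f v == j]| <= j.

Lemma card_le_tri j : #|[set v | f v <= j]| <= tri j.
Proof.
elim: j => [|j IHj].
  have -> : [set v | f v <= 0] = [set v | f v == 0] by apply/setP=> v; rewrite !inE leqn0.
  by rewrite /tri big_geq // card_fiber_le.
have -> : [set v | f v <= j.+1] = [set v | f v <= j] :|: [set v | f v == j.+1].
  by apply/setP=> v; rewrite !inE leq_eqVlt ltnS orbC.
by rewrite triS (leq_trans (leq_card_setU _ _)) // leq_add.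
Qed.

Lemma sum_squares_le_sum k : #|T| = tri k -> sum_squares k <= \sum_v f v.
Proof.
move=> cardT; rewrite -sum_tri_diff.
have card_gt j : #|[set v | j < f v]| = tri k - #|[set v | f v <= j]|.
  rewrite -cardT -(cardsC [set v | f v <= j]) addKn.
  by apply: eq_card => v; rewrite !inE ltnNge.
apply: (@leq_trans (\sum_v \sum_(0 <= j < k) (j < f v))); last first.
  by apply: leq_sum => v _; rewrite sum_ltn_minn geq_minl.
rewrite exchange_big /=; apply: leq_sum => j _.
rewrite -[X in _ <= X]big_mkcond sum1dep_card card_gt.
exact/leq_sub2l/card_le_tri.
Qed.

End LayerCake.

Lemma eq_set2 (T : finType) (a b x y : T) :
  ([set x; y] == [set a; b]) = ((x, y) == (a, b)) || ((x, y) == (b, a)).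
Proof.
apply/idP/idP => [/eqP E|]; last first.
  by case/orP=> /eqP[-> ->] //; apply/eqP; exact: setUC.
have := set21 a b; have := set22 a b; rewrite -E !inE.
have := set21 x y; have := set22 x y; rewrite E !inE.
by do ![case/orP=> /eqP ?]; subst; rewrite ?eqxx ?orbT.
Qed.

Section Degrees.
Variables (T : finType) (e : rel T).

Lemma deg_sum v : deg e v = \sum_y e v y.
Proof. by rewrite /deg -sum1dep_card big_mkcond. Qed.

Lemma handshake : simple_graph e -> 2 * nedges e = \sum_v deg e v.
Proof.
case=> e_sym e_irr; rewrite /nedges; set E := [set S : {set T} | _].
have fiber2 S : S \in E ->
    #|[set p : T * T | e p.1 p.2 && ([set p.1; p.2] == S)]| = 2.
  rewrite inE => /existsP[a /existsP[b /andP[/andP[neq_ab e_ab] /eqP ->]]].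
  have -> : [set p : T * T | e p.1 p.2 && ([set p.1; p.2] == [set a; b])]
            = [set (a, b); (b, a)].
    apply/setP=> -[x y]; rewrite !inE eq_set2.
    case: eqP => [[-> ->]|_] /=; first by rewrite e_ab.
    by case: eqP => [[-> ->]|_]; rewrite ?andbF // e_sym e_ab.
  by rewrite cards2 xpair_eqE negb_and neq_ab.
rewrite (eq_bigr _ (fun v _ => deg_sum v)) pair_bigA /= -big_mkcond /=.
rewrite (partition_big (fun p => [set p.1; p.2]) (mem E)) /=; last first.
  move=> [x y] /= e_xy; rewrite inE; apply/existsP; exists x; apply/existsP; exists y.
  by rewrite e_xy eqxx !andbT; apply: contraTneq e_xy => ->; rewrite e_irr.
rewrite (eq_bigr (fun _ => 2)) => [|S ES]; last by rewrite sum1dep_card fiber2.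
by rewrite sum_nat_const mulnC.
Qed.

Lemma card_deg_class v : locally_irregular e ->
  #|[set u | deg e u == deg e v]| + deg e v <= #|T|.
Proof.
move=> irr; rewrite addnC -cardsUI.
have -> : [set y | e v y] :&: [set u | deg e u == deg e v] = set0.
  apply/setP => y; rewrite !inE; apply/andP => -[/irr]; rewrite eq_sym.
  by move=> /negbTE ->.
by rewrite cards0 addn0 max_card.
Qed.

End Degrees.

Lemma nedges_le_mk (T : finType) (e : rel T) k : #|T| = tri k ->
  simple_graph e -> locally_irregular e -> nedges e <= mk k.
Proof.
move=> cardT sg irr.
pose codeg v := #|T| - deg e v.
have deg_le v : deg e v <= #|T| := max_card _.
have fiber j : #|[set v | codeg v == j]| <= j.
  case: (pickP (fun v => codeg v == j)) => [v /eqP <- | none]; last first.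
    by rewrite (_ : [set v | _] = set0) ?cards0 //; apply/setP=> v; rewrite !inE none.
  have -> : [set u | codeg u == codeg v] = [set u | deg e u == deg e v].
    apply/setP=> u; rewrite !inE /codeg; apply/eqP/eqP => [eq_codeg | -> //].
    by rewrite -(subKn (deg_le u)) eq_codeg subKn.
  by have := card_deg_class v irr; rewrite /codeg; lia.
have sum_codeg : \sum_v codeg v + \sum_v deg e v = #|T| * #|T|.
  rewrite -big_split /= (eq_bigr (fun _ => #|T|)) => [|v _]; last by rewrite subnK.
  by rewrite sum_nat_const.
have := sum_squares_le_sum fiber cardT; have := handshake sg.
by rewrite mkE leq_divRL // -cardT; lia.
Qed.

Section Multipartite.
Variables (T : finType) (g : T -> nat).

Definition multipartite : rel T := [rel x y | g x != g y].

Lemma multipartite_simple : simple_graph multipartite.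
Proof. by split=> [x y | x]; rewrite /multipartite /= ?eqxx // eq_sym. Qed.

Lemma deg_multipartite v : deg multipartite v = #|T| - #|[set u | g u == g v]|.
Proof.
rewrite -(cardsC [set u | g u == g v]) addKn.
by apply: eq_card => u; rewrite !inE eq_sym.
Qed.

Lemma multipartite_locally_irregular :
  (forall x y, g x != g y -> #|[set u | g u == g x]| != #|[set u | g u == g y]|) ->
  locally_irregular multipartite.
Proof.
move=> distinct_sizes x y /= /distinct_sizes; rewrite !deg_multipartite.
by have := max_card [set u | g u == g x]; have := max_card [set u | g u == g y]; lia.
Qed.

Lemma nedges_multipartite :
  2 * nedges multipartite + \sum_v #|[set u | g u == g v]| = #|T| ^ 2.
Proof.
rewrite (handshake multipartite_simple) -big_split /=.
rewrite (eq_bigr (fun _ => #|T|)) => [|v _]; last by rewrite deg_multipartite subnK ?max_card.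
by rewrite sum_nat_const.
Qed.

End Multipartite.

(* [part k] cuts 0, ..., t_k - 1 into consecutive blocks of sizes 1, ..., k and
   labels each block by its size. *)
Fixpoint part (k u : nat) : nat :=
  if k is k'.+1 then (if u < tri k' then part k' u else k) else 0.

Lemma part_bounds k u : u < tri k -> 0 < part k u <= k.
Proof.
elim: k => [|k IHk] /= lt_u; first by move: lt_u; rewrite /tri big_geq.
by case: ifP => [/IHk /andP[-> /leqW ->] | _]; rewrite ?leqnn.
Qed.

Lemma sum_part k (F : nat -> nat) :
  \sum_(u < tri k) F (part k u) = \sum_(0 <= j < k) j.+1 * F j.+1.
Proof.
rewrite -(big_mkord xpredT (fun u => F (part k u))).
elim: k => [|k IHk]; first by rewrite !big_geq // /tri big_geq.
rewrite big_nat_recr //= -IHk (big_cat_nat _ (n := tri k)) ?leq_tri //=.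
congr (_ + _); first by apply: eq_big_nat => u /andP[_ ->].
rewrite (eq_big_nat _ _ (F2 := fun _ => F k.+1)) => [|u /andP[le_u _]].
  by rewrite sum_nat_const_nat triS addKn.
by rewrite /= ltnNge le_u.
Qed.

Lemma card_part k b : 0 < b <= k -> #|[set u : 'I_(tri k) | part k u == b]| = b.
Proof.
case/andP=> b_gt0 le_bk; rewrite -sum1dep_card big_mkcond /=.
rewrite (sum_part k (fun c => if c == b then 1 else 0)).
rewrite (eq_big_nat _ _ (F2 := fun j => if j == b.-1 then b else 0)) => [|j _].
  by rewrite -big_mkcond big_nat1_eq ifT //; lia.
by case: eqP; case: eqP; lia.
Qed.

Lemma sum_part_id k : \sum_(u < tri k) part k u = sum_squares k.
Proof.
rewrite (sum_part k id) /sum_squares big_add1 /=.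
by apply: eq_bigr => j _; rewrite mulnn.
Qed.

Lemma exists_locally_irregular_mk k : exists e : rel 'I_(tri k),
  [/\ simple_graph e, locally_irregular e & nedges e = mk k].
Proof.
pose g (u : 'I_(tri k)) := part k u.
have size_part v : #|[set u | g u == g v]| = g v := card_part (part_bounds (ltn_ord v)).
exists (multipartite g); split; first exact: multipartite_simple.
  by apply: multipartite_locally_irregular => x y; rewrite !size_part.
have := nedges_multipartite g.
rewrite (eq_bigr _ (fun v _ => size_part v)) sum_part_id card_ord mkE => <-.
by rewrite addnK mulKn.
Qed.

Theorem lemma4 (k : nat) : 1 <= k ->
  (exists e : rel 'I_(tri k),
      [/\ simple_graph e, locally_irregular e & nedges e = mk k]) /\
  (forall e : rel 'I_(tri k),
      simple_graph e -> locally_irregular e -> nedges e <= mk k).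
Proof.
move=> _; split; first exact: exists_locally_irregular_mk.
by move=> e; apply: nedges_le_mk; rewrite card_ord.
Qed.
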